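(* Let $\sigma$ be a signature, $F$ a first-order sentence of $\sigma$, and $\mathbf{c}$ a list of distinct predicate and function constants of $\sigma$ (the intensional constants). For every interpretation $I$ of $\sigma$, $I \models \mathrm{SM}[F;\mathbf{c}]$ if and only if both of the following hold: (i) $I \models F$; (ii) no interpretation $J$ of $\sigma^I$ with $J <^{\mathbf{c}} I$ satisfies the reduct $(gr_I[F])^{\underline{I}}$.
   Context: Formulas are (possibly many-sorted) first-order formulas built from $\bot,\land,\lor,\rightarrow,\forall,\exists$; $\neg F$ abbreviates $F\rightarrow\bot$, $\top$ abbreviates $\neg\bot$, and $F\leftrightarrow G$ abbreviates $(F\rightarrow G)\land(G\rightarrow F)$. Stable model operator. For predicate symbols $u,c$ of the same arity, $u\le c$ denotes $\forall\mathbf{x}(u(\mathbf{x})\rightarrow c(\mathbf{x}))$; $u=c$ denotes $\forall\mathbf{x}(u(\mathbf{x})\leftrightarrow c(\mathbf{x}))$ if $u,c$ are predicate symbols and $\forall\mathbf{x}(u(\mathbf{x})=c(\mathbf{x}))$ if they are function symbols; for lists these are conjunctions of the componentwise expressions. Let $\mathbf{c}$ be a list of distinct predicate and function constants and $\widehat{\mathbf{c}}$ a list of distinct predicate and function variables corresponding to $\mathbf{c}$ (same arities/sorts). Write $\mathbf{c}^{pred}$, $\widehat{\mathbf{c}}^{pred}$ for the sublists of predicate symbols. $\widehat{\mathbf{c}}<\mathbf{c}$ abbreviates $(\widehat{\mathbf{c}}^{pred}\le\mathbf{c}^{pred})\land\neg(\widehat{\mathbf{c}}=\mathbf{c})$.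 For a formula $F$, $F^*(\widehat{\mathbf{c}})$ is defined recursively: if $F$ is atomic (including $\bot$), $F^*=F'\land F$ where $F'$ is obtained from $F$ by replacing every intensional constant from $\mathbf{c}$ by the corresponding variable from $\widehat{\mathbf{c}}$; $(G\land H)^*=G^*\land H^*$; $(G\lor H)^*=G^*\lor H^*$; $(G\rightarrow H)^*=(G^*\rightarrow H^* )\land(G\rightarrow H)$; $(\forall xG)^*=\forall xG^*$; $(\exists xG)^*=\exists xG^*$. Then $\mathrm{SM}[F;\mathbf{c}]$ is the second-order formula $F\land\neg\exists\widehat{\mathbf{c}}(\widehat{\mathbf{c}}<\mathbf{c}\land F^*(\widehat{\mathbf{c}}))$. Infinitary ground formulas. For an interpretation $I$ of $\sigma$ with universe $|I|$, introduce for each $\xi\in|I|$ a new object constant $\xi^\diamond$ (an object name); $\sigma^I$ is $\sigma$ extended with all object names, and $I$ is identified with its extension to $\sigma^I$ with $I(\xi^\diamond)=\xi$. Let $A$ be the set of ground atomic formulas of the signature. Define $\mathcal{F}_0=A\cup\{\bot\}$ and $\mathcal{F}_{i+1}$ as the set of expressions $\mathcal{H}^\land$ and $\mathcal{H}^\lor$ for all subsets $\mathcal{H}\subseteq\mathcal{F}_0\cup\dots\cup\mathcal{F}_i$, together with $F\rightarrow G$ for $F,G\in\mathcal{F}_0\cup\dots\cup\mathcal{F}_i$; infinitary ground formulas are elements of $\bigcup_i\mathcal{F}_i$. $F\land G$ means $\{F,G\}^\land$ and $F\lor G$ means $\{F,G\}^\lor$. Satisfaction: atoms as in first-order logic; $I\models\mathcal{H}^\land$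 iff $I\models G$ for all $G\in\mathcal{H}$; $I\models\mathcal{H}^\lor$ iff $I\models G$ for some $G\in\mathcal{H}$; $I\models G\rightarrow H$ iff $I\not\models G$ or $I\models H$. Grounding w.r.t. $I$: $gr_I[F]=F$ for atomic $F$ (ground terms, including intensional function terms, are left as they are); $gr_I[F\odot G]=gr_I[F]\odot gr_I[G]$ for $\odot\in\{\land,\lor,\rightarrow\}$; $gr_I[\forall xF(x)]=\{gr_I[F(\xi^\diamond)]\mid\xi\in|I|\}^\land$; $gr_I[\exists xF(x)]=\{gr_I[F(\xi^\diamond)]\mid\xi\in|I|\}^\lor$. Reduct $F^{\underline{I}}$ of an infinitary ground formula: for atomic $F$, $F^{\underline{I}}=\bot$ if $I\not\models F$ and $F$ otherwise; $(\mathcal{H}^\land)^{\underline{I}}=\bot$ if $I\not\models\mathcal{H}^\land$, else $\{G^{\underline{I}}\mid G\in\mathcal{H}\}^\land$; $(\mathcal{H}^\lor)^{\underline{I}}=\bot$ if $I\not\models\mathcal{H}^\lor$, else $\{G^{\underline{I}}\mid G\in\mathcal{H}\}^\lor$; $(G\rightarrow H)^{\underline{I}}=\bot$ if $I\not\models G\rightarrow H$, else $G^{\underline{I}}\rightarrow H^{\underline{I}}$. For interpretations $J,I$ of the same signature, $J<^{\mathbf{c}}I$ means: $J$ and $I$ have the same universe and agree on all constants not in $\mathbf{c}$; $p^J\subseteq p^I$ for every predicate constant $p$ in $\mathbf{c}$; and $J$ and $I$ do not agree on $\mathbf{c}$. *)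

From Stdlib Require Import ClassicalDescription.
From mathcomp Require Import all_boot.

Unset Implicit Arguments.

Record signature := Signature {
  sort : eqType;
  psym : eqType;
  fsym : eqType;                         (* function constants (arity 0 = object constants) *)
  parity : psym -> nat;
  psorts : forall p : psym, 'I_(parity p) -> sort;
  farity : fsym -> nat;
  fsorts : forall f : fsym, 'I_(farity f) -> sort;
  fres : fsym -> sort }.

Definition var (σ : signature) : eqType := (sort σ * nat)%type.

Inductive term (σ : signature) : sort σ -> Type :=
| TVar (x : var σ) : term σ x.1
| TApp (f : fsym σ) (args : forall i : 'I_(farity σ f), term σ (fsorts σ f i))
    : term σ (fres σ f).

Inductive form (σ : signature) : Type :=
| FBot
| FPred (p : psym σ) (args : forall i : 'I_(parity σ p), term σ (psorts σ p i))
| FEq (s : sort σ) (t1 t2 : term σ s)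
| FAnd (G H : form σ)
| FOr (G H : form σ)
| FImp (G H : form σ)
| FAll (x : var σ) (G : form σ)
| FEx (x : var σ) (G : form σ).

Arguments TVar {σ} x.
Arguments TApp {σ} f args.
Arguments FBot {σ}.
Arguments FPred {σ} p args.
Arguments FEq {σ} s t1 t2.
Arguments FAnd {σ} G H.
Arguments FOr {σ} G H.
Arguments FImp {σ} G H.
Arguments FAll {σ} x G.
Arguments FEx {σ} x G.

Fixpoint occurs_term {σ} (x : var σ) {s} (t : term σ s) : Prop :=
  match t with
  | TVar y => x = y
  | TApp f args => exists i, occurs_term x (args i)
  end.

Fixpoint free_in {σ} (x : var σ) (F : form σ) : Prop :=
  match F with
  | FBot => False
  | FPred p args => exists i, occurs_term x (args i)
  | FEq s t1 t2 => occurs_term x t1 \/ occurs_term x t2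
  | FAnd G H | FOr G H | FImp G H => free_in x G \/ free_in x H
  | FAll y G | FEx y G => x <> y /\ free_in x G
  end.

Definition sentence {σ} (F : form σ) : Prop := forall x : var σ, ~ free_in x F.

Record str (σ : signature) (D : sort σ -> Type) := Str {
  sfun : forall f : fsym σ, (forall i : 'I_(farity σ f), D (fsorts σ f i)) -> D (fres σ f);
  spred : forall p : psym σ, (forall i : 'I_(parity σ p), D (psorts σ p i)) -> Prop }.
Arguments sfun {σ D} s f args.
Arguments spred {σ D} s p args.

Record interp (σ : signature) := Interp {
  carrier : sort σ -> Type;
  carrier_ne : forall s, inhabited (carrier s);
  istr : str σ carrier }.
Arguments carrier {σ} _ _.
Arguments istr {σ} _.

Section FOSemantics.
Context {σ : signature} {D : sort σ -> Type}.

Definition valuation := forall x : var σ, D x.1.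

Definition upd (env : valuation) (x : var σ) (d : D x.1) : valuation :=
  fun y => match x =P y with
           | ReflectT e => eq_rect x (fun z : var σ => D z.1) d y e
           | ReflectF _ => env y
           end.

Fixpoint eval (M : str σ D) (env : valuation) {s} (t : term σ s) : D s :=
  match t in term _ s return D s with
  | TVar x => env x
  | TApp f args => sfun M f (fun i => eval M env (args i))
  end.

Fixpoint sat (M : str σ D) (env : valuation) (F : form σ) : Prop :=
  match F with
  | FBot => False
  | FPred p args => spred M p (fun i => eval M env (args i))
  | FEq s t1 t2 => eval M env t1 = eval M env t2
  | FAnd G H => sat M env G /\ sat M env H
  | FOr G H => sat M env G \/ sat M env H
  | FImp G H => sat M env G -> sat M env H
  | FAll x G => forall d : D x.1, sat M (upd env x d) G
  | FEx x G => exists d : D x.1, sat M (upd env x d) G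
  end.
End FOSemantics.

Definition models {σ} (I : interp σ) (F : form σ) : Prop :=
  forall env : @valuation σ (carrier I), sat (istr I) env F.

Definition intensional (σ : signature) : eqType := (psym σ + fsym σ)%type.

Definition inP {σ} (c : seq (intensional σ)) (p : psym σ) : bool := inl p \in c.
Definition inF {σ} (c : seq (intensional σ)) (f : fsym σ) : bool := inr f \in c.

(* The operator SM.  The second-order formula F^*(ĉ) is written in the *)
(* signature [hat σ], which contains, besides every constant of σ      *)
(* (tagged inl), a predicate/function variable (tagged inr) for each   *)
(* constant; only those corresponding to members of c ever occur.      *)
Definition hat (σ : signature) : signature :=
  {| sort := sort σ;
     psym := (psym σ + psym σ)%type;
     fsym := (fsym σ + fsym σ)%type;
     parity := fun p => match p with inl p | inr p => parity σ p end;
     psorts := fun p => match p as p0 return 'I_(match p0 with inl p | inr p => parity σ p end) -> sort σ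
                        with inl p | inr p => psorts σ p end;
     farity := fun f => match f with inl f | inr f => farity σ f end;
     fsorts := fun f => match f as f0 return 'I_(match f0 with inl f | inr f => farity σ f end) -> sort σ
                        with inl f | inr f => fsorts σ f end;
     fres := fun f => match f with inl f | inr f => fres σ f end |}.

Section Rename.
Context {σ : signature} (bp : psym σ -> bool) (bf : fsym σ -> bool).
Fixpoint ren_term {s} (t : term σ s) : term (hat σ) s :=
  match t in term _ s return term (hat σ) s with
  | TVar x => @TVar (hat σ) x
  | TApp f args =>
      if bf f then @TApp (hat σ) (inr f) (fun i => ren_term (args i))
      else @TApp (hat σ) (inl f) (fun i => ren_term (args i))
  end.

Fixpoint ren (F : form σ) : form (hat σ) :=
  match F with
  | FBot => FBot
  | FPred p args =>
      if bp p then @FPred (hat σ) (inr p) (fun i => ren_term (args i))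
      else @FPred (hat σ) (inl p) (fun i => ren_term (args i))
  | FEq s t1 t2 => @FEq (hat σ) s (ren_term t1) (ren_term t2)
  | FAnd G H => FAnd (ren G) (ren H)
  | FOr G H => FOr (ren G) (ren H)
  | FImp G H => FImp (ren G) (ren H)
  | FAll x G => @FAll (hat σ) x (ren G)
  | FEx x G => @FEx (hat σ) x (ren G)
  end.
End Rename.

Definition embed {σ} (F : form σ) : form (hat σ) := ren (fun _ => false) (fun _ => false) F.
Definition prime {σ} (c : seq (intensional σ)) (F : form σ) : form (hat σ) :=
  ren (inP c) (inF c) F.

Fixpoint star {σ} (c : seq (intensional σ)) (F : form σ) : form (hat σ) :=
  match F with
  | FBot | FPred _ _ | FEq _ _ _ => FAnd (prime c F) (embed F)
  | FAnd G H => FAnd (star c G) (star c H)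
  | FOr G H => FOr (star c G) (star c H)
  | FImp G H => FAnd (FImp (star c G) (star c H)) (embed (FImp G H))
  | FAll x G => @FAll (hat σ) x (star c G)
  | FEx x G => @FEx (hat σ) x (star c G)
  end.

Definition hatstr {σ D} (M V : str σ D) : str (hat σ) D :=
  {| sfun := fun f => match f as f0 return
                (forall i : 'I_(farity (hat σ) f0), D (fsorts (hat σ) f0 i)) -> D (fres (hat σ) f0)
              with inl f => sfun M f | inr f => sfun V f end;
     spred := fun p => match p as p0 return
                (forall i : 'I_(parity (hat σ) p0), D (psorts (hat σ) p0 i)) -> Prop
              with inl p => spred M p | inr p => spred V p end |}.

(* satisfaction of  ĉ < c  (ĉ^pred <= c^pred  /\  ~ ĉ = c), ĉ valued by V *)
Definition hat_lt {σ D} (c : seq (intensional σ)) (V M : str σ D) : Prop :=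
  (forall p, inP c p -> forall a, spred V p a -> spred M p a) /\
  ~ ((forall p, inP c p -> forall a, spred V p a <-> spred M p a) /\
     (forall f, inF c f -> forall a, sfun V f a = sfun M f a)).

Definition SM_models {σ} (c : seq (intensional σ)) (I : interp σ) (F : form σ) : Prop :=
  forall env : @valuation σ (carrier I),
    sat (istr I) env F /\
    ~ exists V : str σ (carrier I),
        hat_lt c V (istr I) /\ sat (hatstr (istr I) V) env (star c F).

Section Infinitary.
Context {σ : signature} {D : sort σ -> Type}.

(* ground terms of σ^I: names ξ^⋄ and applications of function constants *)
Inductive gterm : sort σ -> Type :=
| GName (s : sort σ) (d : D s) : gterm s
| GApp (f : fsym σ) (args : forall i : 'I_(farity σ f), gterm (fsorts σ f i)) : gterm (fres σ f).

Inductive gatom : Type :=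
| GPred (p : psym σ) (args : forall i : 'I_(parity σ p), gterm (psorts σ p i))
| GEq (s : sort σ) (t1 t2 : gterm s).

(* H^∧ and H^∨ for a set H, given as an indexed family *)
Inductive inf : Type :=
| IAtom (a : gatom)
| IBot
| IConj (J : Type) (H : J -> inf)
| IDisj (J : Type) (H : J -> inf)
| IImp (G H : inf).

Fixpoint geval (M : str σ D) {s} (t : gterm s) : D s :=
  match t in gterm s return D s with
  | GName _ d => d
  | GApp f args => sfun M f (fun i => geval M (args i))
  end.

Definition asat (M : str σ D) (a : gatom) : Prop :=
  match a with
  | GPred p args => spred M p (fun i => geval M (args i))
  | GEq s t1 t2 => geval M t1 = geval M t2
  end.

Fixpoint isat (M : str σ D) (F : inf) : Prop :=
  match F with
  | IAtom a => asat M a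
  | IBot => False
  | IConj J H => forall j, isat M (H j)
  | IDisj J H => exists j, isat M (H j)
  | IImp G H => isat M G -> isat M H
  end.

Definition bin (b : bool) (G H : inf) := if b then G else H.

Fixpoint gr_term (env : @valuation σ D) {s} (t : term σ s) : gterm s :=
  match t in term _ s return gterm s with
  | TVar x => GName x.1 (env x)
  | TApp f args => GApp f (fun i => gr_term env (args i))
  end.

Fixpoint gr (env : @valuation σ D) (F : form σ) : inf :=
  match F with
  | FBot => IBot
  | FPred p args => IAtom (GPred p (fun i => gr_term env (args i)))
  | FEq s t1 t2 => IAtom (GEq s (gr_term env t1) (gr_term env t2))
  | FAnd G H => IConj bool (fun b => bin b (gr env G) (gr env H))
  | FOr G H => IDisj bool (fun b => bin b (gr env G) (gr env H))
  | FImp G H => IImp (gr env G) (gr env H)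
  | FAll x G => IConj (D x.1) (fun d => gr (upd env x d) G)
  | FEx x G => IDisj (D x.1) (fun d => gr (upd env x d) G)
  end.

Definition ifsat (M : str σ D) (F : inf) (G : inf) : inf :=
  if excluded_middle_informative (isat M F) then G else IBot.

Fixpoint reduct (M : str σ D) (F : inf) : inf :=
  match F with
  | IAtom a => ifsat M F (IAtom a)
  | IBot => IBot
  | IConj J H => ifsat M F (IConj J (fun j => reduct M (H j)))
  | IDisj J H => ifsat M F (IDisj J (fun j => reduct M (H j)))
  | IImp G H => ifsat M F (IImp (reduct M G) (reduct M H))
  end.

(* J <^c I : same universe (J is a structure on D), agree outside c,
   p^J ⊆ p^I for predicate constants p in c, and disagree on c.
   Object names are not in c, so J interprets ξ^⋄ as ξ (see geval). *)
Definition str_lt (c : seq (intensional σ)) (J M : str σ D) : Prop :=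
  (forall p, ~~ inP c p -> forall a, spred J p a <-> spred M p a) /\
  (forall f, ~~ inF c f -> forall a, sfun J f a = sfun M f a) /\
  (forall p, inP c p -> forall a, spred J p a -> spred M p a) /\
  ~ ((forall p, inP c p -> forall a, spred J p a <-> spred M p a) /\
     (forall f, inF c f -> forall a, sfun J f a = sfun M f a)).
End Infinitary.

(* Read the predicate and function variables ĉ of F^*(ĉ) as the c-part of an
   interpretation J that agrees with I outside c.  By induction on F,
   (I, ĉ) |= F^*(ĉ) iff J |= (gr_I[F])^I: in both, each subformula must hold in
   J and in I, since F^* conjoins the unstarred formula at atoms and
   implications while the reduct collapses to bot wherever I fails.  Under
   this correspondence ĉ < c is exactly J <^c I. *)
From Pilot Require Import Defs.
From Stdlib Require Import FunctionalExtensionality ClassicalDescription.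
From mathcomp Require Import all_boot.
Import Defs.

Section Grounding.
Context {σ : signature} {D : sort σ -> Type}.
Implicit Types (M J : str σ D) (env : @valuation σ D).

Lemma geval_gr_term M env s (t : term σ s) : geval M (gr_term env t) = eval M env t.
Proof.
elim: t => [x|f args IH] //=.
by congr (sfun M f); apply: functional_extensionality_dep => i; apply: IH.
Qed.

Lemma isat_conj2 M (H : bool -> inf) : isat M (IConj bool H) <-> isat M (H true) /\ isat M (H false).
Proof. by split=> [h|[hT hF] []]; [split; [apply: (h true)|apply: (h false)]|..]. Qed.

Lemma isat_disj2 M (H : bool -> inf) : isat M (IDisj bool H) <-> isat M (H true) \/ isat M (H false).
Proof. by split=> [[[] h]|[h|h]]; [left|right|exists true|exists false]. Qed.

Lemma isat_gr M F env : isat M (gr env F) <-> sat M env F.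
Proof.
elim: F env => [|p args|s t1 t2|G IG H IH|G IG H IH|G IG H IH|x G IG|x G IG] env.
- by [].
- by rewrite /= (functional_extensionality_dep _ _ (fun i => geval_gr_term M env _ (args i))).
- by rewrite /= !geval_gr_term.
- by rewrite isat_conj2 IG IH.
- by rewrite isat_disj2 IG IH.
- by rewrite /= IG IH.
- by split=> h d; apply/IG/h.
- by split=> -[d h]; exists d; apply/IG.
Qed.

Lemma isat_ifsat J M F G : isat J (ifsat M F G) <-> isat M F /\ isat J G.
Proof. by rewrite /ifsat; case: excluded_middle_informative => /= h; tauto. Qed.

Lemma isat_reduct {J M : str σ D} {G : inf} : isat J (reduct M G) -> isat M G.
Proof. by case: G => [a||K H|K H|G H] //= /isat_ifsat[]. Qed.

End Grounding.

Section Splicing.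
Context {σ : signature} {D : sort σ -> Type}.
Implicit Types (M J V : str σ D) (env : @valuation σ D).

Definition spliced (bp : psym σ -> bool) (bf : fsym σ -> bool) V M J : Prop :=
  (forall f a, sfun J f a = if bf f then sfun V f a else sfun M f a) /\
  (forall p a, spred J p a <-> if bp p then spred V p a else spred M p a).

Definition splice (bp : psym σ -> bool) (bf : fsym σ -> bool) V M : str σ D :=
  Str σ D (fun f a => if bf f then sfun V f a else sfun M f a)
          (fun p a => if bp p then spred V p a else spred M p a).

Lemma spliced_splice bp bf V M : spliced bp bf V M (splice bp bf V M).
Proof. by []. Qed.

Section Renaming.
Context {bp : psym σ -> bool} {bf : fsym σ -> bool} {V M J : str σ D}.
Hypothesis VMJ : spliced bp bf V M J.

Lemma eval_ren_term env s (t : term σ s) : eval (hatstr M V) env (ren_term bf t) = eval J env t.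
Proof.
elim: t => [x|f args IH] //=; rewrite VMJ.1.
by case: (bf f) => /=; congr (sfun _ f); apply: functional_extensionality_dep => i; apply: IH.
Qed.

Lemma sat_ren F env : sat (hatstr M V) env (ren bp bf F) <-> sat J env F.
Proof.
elim: F env => [|p args|s t1 t2|G IG H IH|G IG H IH|G IG H IH|x G IG|x G IG] env /=.
- by [].
- rewrite VMJ.2 -(functional_extensionality_dep _ _ (fun i => eval_ren_term env _ (args i))).
  by case: (bp p).
- by rewrite !eval_ren_term.
- by rewrite IG IH.
- by rewrite IG IH.
- by rewrite IG IH.
- by split=> h d; apply/IG/h.
- by split=> -[d h]; exists d; apply/IG.
Qed.

End Renaming.

Lemma sat_embed V M F env : sat (hatstr M V) env (embed F) <-> sat M env F.
Proof. exact: sat_ren. Qed.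

End Splicing.

Section StarReduct.
Context {σ : signature} {D : sort σ -> Type} {c : seq (intensional σ)}.
Context {V M J : str σ D}.
Hypothesis VMJ : spliced (inP c) (inF c) V M J.

Lemma sat_prime_embed (A : form σ) (env : @valuation σ D) :
  sat (hatstr M V) env (FAnd (prime c A) (embed A)) <-> sat J env A /\ sat M env A.
Proof. by rewrite -(sat_ren VMJ A env) -(sat_embed V M A env). Qed.

Lemma sat_star_reduct (F : form σ) (env : @valuation σ D) :
  sat (hatstr M V) env (star c F) <-> isat J (reduct M (gr env F)).
Proof.
elim: F env => [|p args|s t1 t2|G IG H IH|G IG H IH|G IG H IH|x G IG|x G IG] env.
1-3: rewrite sat_prime_embed -!isat_gr.
- by rewrite /=; tauto.
- by rewrite /= isat_ifsat; tauto.
- by rewrite /= isat_ifsat; tauto.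
- have fG h := isat_reduct ((IG env).1 h); have fH h := isat_reduct ((IH env).1 h).
  by rewrite isat_ifsat !isat_conj2 /= -IG -IH; tauto.
- have fG h := isat_reduct ((IG env).1 h); have fH h := isat_reduct ((IH env).1 h).
  by rewrite isat_ifsat !isat_disj2 /= -IG -IH; tauto.
- by rewrite isat_ifsat /= -IG -IH !sat_embed !isat_gr; tauto.
- have fG e h := isat_reduct ((IG e).1 h).
  rewrite isat_ifsat /=.
  by split=> [h|[_ h] d]; [split=> d; [apply/fG/h|apply/IG/h]|apply/IG/h].
- have fG e h := isat_reduct ((IG e).1 h).
  rewrite isat_ifsat /=.
  by split=> [[d h]|[_ [d h]]]; [split; exists d; [apply: fG|apply/IG]|exists d; apply/IG].
Qed.
End StarReduct.

Section Minimality.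
Context {σ : signature} {D : sort σ -> Type} {c : seq (intensional σ)}.
Implicit Types (M V : str σ D).

Lemma spliced_str_lt {J M : str σ D} : str_lt c J M -> spliced (inP c) (inF c) J M J.
Proof.
case=> outP [outF _]; split=> [f a|p a].
- by case: ifP => // /negbT /outF ->.
- by case: ifP => [_|/negbT /outP]; [split|].
Qed.

Lemma str_lt_splice V M : hat_lt c V M -> str_lt c (splice (inP c) (inF c) V M) M.
Proof.
case=> leV neqV; split; [|split; [|split]].
- by move=> p /negbTE /= ->.
- by move=> f /negbTE /= ->.
- by move=> p inp a /=; rewrite inp; apply: leV.
- case=> eqP eqF; apply: neqV; split=> [p inp a|f inf a].
  + by have := eqP p inp a; rewrite /= inp.
  + by have := eqF f inf a; rewrite /= inf.
Qed.

End Minimality.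

Theorem theorem1 (σ : signature) (F : form σ) (c : seq (intensional σ))
  (Hc : uniq c) (HF : sentence F) (I : interp σ) :
  SM_models c I F <->
  (models I F /\
   forall env : @valuation σ (carrier I),
     ~ exists J : str σ (carrier I),
         str_lt c J (istr I) /\ isat J (reduct (istr I) (gr env F))).
Proof.
split=> [SM | [IF minI] env].
- split=> [env | env [J [ltJ satJ]]]; first exact: (SM env).1.
  apply: (SM env).2; exists J; split; first by case: ltJ => _ [_].
  exact/(sat_star_reduct (spliced_str_lt ltJ) F env).
- split=> [|[V [ltV satV]]]; first exact: IF.
  apply: (minI env); exists (splice (inP c) (inF c) V (istr I)); split.
  + exact: str_lt_splice.
  + exact/(sat_star_reduct (spliced_splice _ _ V (istr I)) F env).
Qed.
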